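(* Let $G$ be a finite nilpotent group whose order is divisible by at least two distinct primes. Then the cyclic graph $\Delta(G)$ is connected and $\mathrm{diam}(\Delta(G))\le 3$.
   Context: For a finite group $G$, the cyclic graph $\Delta(G)$ has vertex set $G^{\#}=G\setminus\{1\}$, and distinct vertices $x,y$ are adjacent if and only if the subgroup $\langle x,y\rangle$ is cyclic. The diameter is the maximum graph distance between two vertices. *)

From mathcomp Require Import all_boot all_fingroup all_solvable.
Set Implicit Arguments. Unset Strict Implicit. Unset Printing Implicit Defensive.
Local Open Scope group_scope.

Definition cyc_adj (gT : finGroupType) (G : {set gT}) : rel gT :=
  fun x y => [&& x \in G^#, y \in G^#, x != y & cyclic <<[set x; y]>>].

Definition cyc_walk_le (gT : finGroupType) (G : {set gT}) (x y : gT) (n : nat) :=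
  exists p : seq gT, [/\ path (cyc_adj G) x p, last x p = y & size p <= n].

Definition cyc_graph_connected (gT : finGroupType) (G : {set gT}) :=
  forall x y, x \in G^# -> y \in G^# ->
    exists p : seq gT, path (cyc_adj G) x p /\ last x p = y.

Definition cyc_graph_diam_le (gT : finGroupType) (G : {set gT}) (n : nat) :=
  forall x y, x \in G^# -> y \in G^# -> cyc_walk_le G x y n.

From mathcomp Require Import all_boot all_fingroup all_solvable.

Set Implicit Arguments. Unset Strict Implicit. Unset Printing Implicit Defensive.

(* In a nilpotent group, elements of coprime orders commute, so together they
   generate a cyclic group; and every vertex x is adjacent to any element of
   prime order in <[x]>.  If x and y have prime divisors p | #[x] and r | #[y]
   with p != r, this gives the walk x - x_p - y_r - y.  Otherwise, choosing a
   prime q | #|G| different from pdiv #[x], either such a pair exists or q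
   divides neither order, and then an element of order q is adjacent to both
   x and y. *)

Local Open Scope group_scope.

Section CyclicGraphWalks.
Variables (gT : finGroupType) (G : {set gT}).

Lemma cyc_walk_le1 x y : x \in G^# -> y \in G^# -> cyclic <<[set x; y]>> ->
  cyc_walk_le G x y 1.
Proof.
move=> xG yG cyc_xy; have [<-|neq_xy] := eqVneq x y; first by exists [::].
by exists [:: y]; rewrite /= /cyc_adj xG yG neq_xy cyc_xy.
Qed.

Lemma cyc_walk_cat x y z m n :
  cyc_walk_le G x y m -> cyc_walk_le G y z n -> cyc_walk_le G x z (m + n).
Proof.
case=> p [path_p <- size_p] [q [path_q last_q size_q]]; exists (p ++ q).
by rewrite cat_path last_cat path_p path_q last_q size_cat leq_add.
Qed.

Lemma cyc_walk_leW x y m n : m <= n -> cyc_walk_le G x y m -> cyc_walk_le G x y n.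
Proof. by move=> le_mn [p [path_p last_p size_p]]; exists p; rewrite (leq_trans size_p). Qed.

Lemma cyc_graph_diam_connected n : cyc_graph_diam_le G n -> cyc_graph_connected G.
Proof. by move=> diamG x y xG yG; have [p []] := diamG x y xG yG; exists p. Qed.

End CyclicGraphWalks.

Section CyclicJoins.
Variable gT : finGroupType.
Implicit Types (x a b : gT) (G : {group gT}).

Lemma in_setD1_order G a : (a \in G^#) = (1 < #[a]) && (a \in G).
Proof. by rewrite order_gt1 !inE. Qed.

Lemma cyclic_join_cycle x a : a \in <[x]> -> cyclic <<[set x; a]>>.
Proof.
move=> ax; apply: cyclicS (cycle_cyclic x).
by rewrite gen_subG subUset !sub1set cycle_id ax.
Qed.

Lemma commute_coprime_cyclic a b :
  commute a b -> coprime #[a] #[b] -> cyclic <<[set a; b]>>.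
Proof.
move=> cab co_ab; apply: cyclicS (cycle_cyclic (a * b)).
rewrite gen_subG subUset !sub1set -!cycle_subG cycleMsub //.
by rewrite cab cycleMsub // coprime_sym.
Qed.

Lemma nilpotent_coprime_commute G a b : nilpotent G -> a \in G -> b \in G ->
  coprime #[a] #[b] -> commute a b.
Proof.
move=> nilG aG bG co_ab.
have: <[a]> \subset 'C(<[b]>).
  by apply: (sub_nilpotent_cent2 nilG); rewrite ?cycle_subG // coprime_sym.
by rewrite cycle_subG => /centP/(_ b (cycle_id b)).
Qed.

End CyclicJoins.

Lemma exists_neq_uniq (T : eqType) (s : seq T) (x : T) : uniq s -> 1 < size s ->
  exists2 y, y \in s & y != x.
Proof.
move=> uniq_s size_s; apply/(@hasP _ (predC1 x)); apply: contraTT size_s => /hasPn s_x.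
by rewrite -leqNgt (uniq_leq_size (s2 := [:: x])) // => y /s_x; rewrite inE negbK.
Qed.

Lemma coprime_prime_neq p r : prime p -> prime r -> p != r -> coprime p r.
Proof. by move=> pr_p pr_r neq_pr; rewrite prime_coprime // dvdn_prime2. Qed.

Section NilpotentCyclicGraph.
Variables (gT : finGroupType) (G : {group gT}).
Hypothesis nilG : nilpotent G.

Lemma nilpotent_coprime_cyclic a b : a \in G -> b \in G ->
  coprime #[a] #[b] -> cyclic <<[set a; b]>>.
Proof.
move=> aG bG co_ab.
exact: commute_coprime_cyclic (nilpotent_coprime_commute nilG aG bG co_ab) co_ab.
Qed.

Lemma cycle_prime_order_vertex x p : x \in G -> prime p -> p %| #[x] ->
  exists2 a, a \in G^# /\ #[a] = p & cyclic <<[set x; a]>>.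
Proof.
move=> xG pr_p p_x; have [a ax oa] := Cauchy pr_p p_x; exists a => //.
  have sxG : <[x]> \subset G by rewrite cycle_subG.
  by rewrite in_setD1_order oa prime_gt1 // (subsetP sxG).
exact: cyclic_join_cycle.
Qed.

Lemma cyc_walk3_distinct_primes x y p r : x \in G^# -> y \in G^# ->
  prime p -> prime r -> p != r -> p %| #[x] -> r %| #[y] -> cyc_walk_le G x y 3.
Proof.
move=> xG1 yG1 pr_p pr_r neq_pr p_x r_y.
have /setD1P[_ xG] := xG1; have /setD1P[_ yG] := yG1.
have [a [aG1 oa] cyc_xa] := cycle_prime_order_vertex xG pr_p p_x.
have [b [bG1 ob] cyc_yb] := cycle_prime_order_vertex yG pr_r r_y.
have /setD1P[_ aG] := aG1; have /setD1P[_ bG] := bG1.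
have cyc_ab : cyclic <<[set a; b]>>.
  by rewrite nilpotent_coprime_cyclic // oa ob coprime_prime_neq.
have cyc_by : cyclic <<[set b; y]>> by rewrite setUC.
exact: cyc_walk_cat (cyc_walk_cat (cyc_walk_le1 xG1 aG1 cyc_xa)
                                  (cyc_walk_le1 aG1 bG1 cyc_ab))
                    (cyc_walk_le1 bG1 yG1 cyc_by).
Qed.

Lemma cyc_walk2_coprime_vertex x y z : x \in G^# -> y \in G^# -> z \in G^# ->
  coprime #[x] #[z] -> coprime #[z] #[y] -> cyc_walk_le G x y 2.
Proof.
move=> xG1 yG1 zG1 co_xz co_zy.
have /setD1P[_ xG] := xG1; have /setD1P[_ yG] := yG1; have /setD1P[_ zG] := zG1.
exact: cyc_walk_cat (cyc_walk_le1 xG1 zG1 (nilpotent_coprime_cyclic xG zG co_xz))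
                    (cyc_walk_le1 zG1 yG1 (nilpotent_coprime_cyclic zG yG co_zy)).
Qed.

End NilpotentCyclicGraph.

Theorem lemma2p4 (gT : finGroupType) (G : {group gT}) :
  nilpotent G -> 2 <= size (primes #|G|) ->
  cyc_graph_connected G /\ cyc_graph_diam_le G 3.
Proof.
move=> nilG primes_G.
suff diamG : cyc_graph_diam_le G 3 by split; first exact: cyc_graph_diam_connected diamG.
move=> x y xG1 yG1.
have x_gt1 : 1 < #[x] by rewrite order_gt1; case/setD1P: xG1.
have y_gt1 : 1 < #[y] by rewrite order_gt1; case/setD1P: yG1.
have [q] := exists_neq_uniq (pdiv #[x]) (primes_uniq #|G|) primes_G.
rewrite mem_primes => /and3P[pr_q _ q_G] neq_qp.
have [q_y | qN_y] := boolP (q %| #[y]).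
  apply: (cyc_walk3_distinct_primes nilG xG1 yG1 (pdiv_prime x_gt1) pr_q _
                                   (pdiv_dvd _) q_y).
  by rewrite eq_sym.
have [q_x | qN_x] := boolP (q %| #[x]).
  apply: (cyc_walk3_distinct_primes nilG xG1 yG1 pr_q (pdiv_prime y_gt1) _
                                   q_x (pdiv_dvd _)).
  by apply: contraNneq qN_y => ->; apply: pdiv_dvd.
have [z zG oz] := Cauchy pr_q q_G.
have zG1 : z \in G^# by rewrite in_setD1_order oz prime_gt1.
apply: cyc_walk_leW (cyc_walk2_coprime_vertex nilG xG1 yG1 zG1 _ _) => //.
  by rewrite coprime_sym oz prime_coprime.
by rewrite oz prime_coprime.
Qed.
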